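(* Let $0<b\le 0.01$ and let $z^*=(x_3,x,x,y_3,y,y)$ with $x_3,y_3,x,y>0$ be a point of the curve of equilibria $\mathcal C$. Then the Jacobian matrix $\big[\partial F_i/\partial z_j(z^* )\big]_{i,j}$ of $F$ at $z^*$ has one eigenvalue equal to $0$ (corresponding to the direction along $\mathcal C$) and its five other eigenvalues all have strictly negative real part.
   Context: Haploid unlinked subfunctionalization model with mutation rate $b$, coordinates $z=(x_3,x_2,x_1,y_3,y_2,y_1)$, $\alpha=1-3b$, $w=x_3+y_3-x_3y_3+x_1y_2+x_2y_1$, vector field $F$: $F_{x_3}=x_3(\alpha-w)$; $F_{x_2}=-x_2w+x_2(y_3+y_1)+bx_3-2bx_2$; $F_{x_1}=-x_1w+x_1(y_3+y_2)+bx_3-2bx_1$; $F_{y_3}=y_3(\alpha-w)$; $F_{y_2}=-y_2w+y_2(x_3+x_1)+by_3-2by_2$; $F_{y_1}=-y_1w+y_1(x_3+x_2)+by_3-2by_1$. The curve of equilibria $\mathcal C$ is the one-parameter family of fixed points of $dz/dt=F(z)$ with $x_1=x_2=x$, $y_1=y_2=y$, parametrized by $x_3$ via $y_3=\frac{-d_1+\sqrt{d_1^2-4d_0d_2}}{2d_2}$ with $d_2=-(1-x_3)^2$, $d_1=2(1-x_3)^2-4b(1-x_3)+2b^2(1+x_3)$, $d_0=-(1-x_3)^2+4b(1-x_3)-b^2(5-2x_3)+b^3$, and $x=\frac{\Gamma-2bx_3}{2(y_3-\beta)}$, $y=\frac{\Gamma-2by_3}{2(x_3-\beta)}$, $\beta=1-b$,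 $\Gamma=x_3+y_3-x_3y_3-\alpha$. *)

(* Ground field: an arbitrary real closed field R
   (the statement is first-order over the reals, so this is the real
   statement, stated for every rcfType). *)
From HB Require Import structures.
From mathcomp Require Import all_boot all_order all_algebra.
Set Implicit Arguments. Unset Strict Implicit. Unset Printing Implicit Defensive.
Import Order.TTheory GRing.Theory Num.Theory.
Local Open Scope ring_scope.

(* Coordinates z = (x3,x2,x1,y3,y2,y1) are indexed by 'I_6 in this order:
   z 0 = x3, z 1 = x2, z 2 = x1, z 3 = y3, z 4 = y2, z 5 = y1.
   The vector field F is polynomial, so we define it over any commutative
   ring S (this lets us evaluate it on polynomials to differentiate). *)
Definition Fsub (S : comNzRingType) (b : S) (z : 'I_6 -> S) : 'I_6 -> S :=
  fun i =>
  let x3 := z (inord 0) in let x2 := z (inord 1) in let x1 := z (inord 2) in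
  let y3 := z (inord 3) in let y2 := z (inord 4) in let y1 := z (inord 5) in
  let alpha := 1 - 3%:R * b in
  let w := x3 + y3 - x3 * y3 + x1 * y2 + x2 * y1 in
  match val i with
  | 0 => x3 * (alpha - w)
  | 1 => - x2 * w + x2 * (y3 + y1) + b * x3 - 2%:R * b * x2
  | 2 => - x1 * w + x1 * (y3 + y2) + b * x3 - 2%:R * b * x1
  | 3 => y3 * (alpha - w)
  | 4 => - y2 * w + y2 * (x3 + x1) + b * y3 - 2%:R * b * y2
  | _ => - y1 * w + y1 * (x3 + x2) + b * y3 - 2%:R * b * y1
  end.

Definition partialF (R : rcfType) (b : R) (z : 'I_6 -> R) (i j : 'I_6) : R :=
  ((Fsub (b%:P) (fun k => (z k)%:P + (if k == j then 'X else 0)) i)^`()).[0].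

Definition jacobianF (R : rcfType) (b : R) (z : 'I_6 -> R) : 'M[R]_6 :=
  \matrix_(i, j) partialF b z i j.

(* Complex numbers as pairs (re, im) and evaluation of a real polynomial
   at a complex number (Horner scheme). *)
Definition cadd (R : rcfType) (a c : R * R) : R * R := (a.1 + c.1, a.2 + c.2).
Definition cmul (R : rcfType) (a c : R * R) : R * R :=
  (a.1 * c.1 - a.2 * c.2, a.1 * c.2 + a.2 * c.1).
Definition ceval (R : rcfType) (p : {poly R}) (z : R * R) : R * R :=
  foldr (fun c acc => cadd (c, 0) (cmul acc z)) (0, 0) (polyseq p).

Definition ceigenvalue (R : rcfType) (n : nat) (A : 'M[R]_n) (lam : R * R) : Prop :=
  ceval (char_poly A) lam = (0, 0).

Definition symPoint (R : rcfType) (x3 x y3 y : R) : 'I_6 -> R :=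
  fun i => match val i with
           | 0 => x3 | 1 => x | 2 => x | 3 => y3 | 4 => y | _ => y end.

Definition onCurveC (R : rcfType) (b x3 x y3 y : R) : Prop :=
  forall i : 'I_6, Fsub b (symPoint x3 x y3 y) i = 0.

(* Let z* = (x3, x, x, y3, y, y) be an equilibrium with positive coordinates and
   put p = 1 - b - y3 - y, q = 1 - b - x3 - x.  The equilibrium equations reduce
   to  x3 + y3 - x3 y3 + 2xy = 1 - 3b,  x p = b x3  and  y q = b y3.
   1. The Jacobian J at z* is computed symbolically: a partial derivative is the
      infinitesimal part of the vector field evaluated at dual numbers.
   2. In the basis Q made of e_x3, (x3,0,0,y3,0,0) and the sums and differences of
      the paired coordinates, J becomes a matrix K (J Q = Q K) whose first row
      vanishes and which leaves the "antisymmetric" plane invariant.  Hence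
      char J = X * c3 * c2 with c3, c2 the characteristic polynomials of a 3x3
      and a 2x2 diagonal block of K.
   3. Modulo the equilibrium equations, the Routh-Hurwitz quantities of c3 and c2
      are explicit polynomials with positive coefficients in b, x3, x, y3, y, p,
      q, 1 - x3, 1 - y3, all of which are positive.  The Routh-Hurwitz criteria
      in degrees 2 and 3, proved directly over R[i], then show that every root of
      c3 c2 has negative real part; since c3(0), c2(0) <> 0, the root 0 of
      char J is simple. *)
From HB Require Import structures.
From mathcomp Require Import all_boot all_order all_algebra.
From mathcomp Require Import ring lra complex.
Import Order.TTheory GRing.Theory Num.Theory.
Set Implicit Arguments. Unset Strict Implicit. Unset Printing Implicit Defensive.
Local Open Scope ring_scope.

(* Dual numbers R[e]/(e^2), as pairs (a, b) standing for a + b e. *)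
Section DualNumbers.
Variable R : comNzRingType.

Definition dual : Type := (R * R)%type.
HB.instance Definition _ := GRing.Zmodule.copy dual (R * R)%type.

Definition dual_one : dual := (1, 0).
Definition dual_mul (a c : dual) : dual := (a.1 * c.1, a.1 * c.2 + a.2 * c.1).

Lemma dual_mulA : associative dual_mul.
Proof. by move=> [a1 a2] [b1 b2] [c1 c2]; congr (_, _) => /=; ring. Qed.
Lemma dual_mulC : commutative dual_mul.
Proof. by move=> [a1 a2] [b1 b2]; congr (_, _) => /=; ring. Qed.
Lemma dual_mul1 : left_id dual_one dual_mul.
Proof. by move=> [a1 a2]; congr (_, _) => /=; ring. Qed.
Lemma dual_mulDl : left_distributive dual_mul +%R.
Proof. by move=> [a1 a2] [b1 b2] [c1 c2]; congr (_, _) => /=; ring. Qed.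
Lemma dual_one_neq0 : dual_one != 0.
Proof. by apply/eqP => [[]] /eqP; rewrite oner_eq0. Qed.
HB.instance Definition _ := GRing.Zmodule_isComNzRing.Build dual
  dual_mulA dual_mulC dual_mul1 dual_mulDl dual_one_neq0.

(* The first-order jet p(0) + p'(0) e of a polynomial; the Leibniz rule makes
   it a ring morphism. *)
Definition taylor1 (p : {poly R}) : dual := (p.[0], p^`().[0]).

Lemma taylor1C (c : R) : taylor1 c%:P = (c, 0).
Proof. by rewrite /taylor1 derivC !hornerC. Qed.

Lemma taylor1_shift (c : R) (d : bool) :
  taylor1 (c%:P + (if d then 'X else 0)) = (c, d%:R).
Proof.
rewrite /taylor1 derivD derivC add0r !hornerD hornerC.
by case: d; rewrite ?derivX ?deriv0 ?hornerX ?hornerC ?horner0 ?addr0.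
Qed.

Lemma taylor1_zmod : zmod_morphism taylor1.
Proof. by move=> p q; rewrite /taylor1 derivB !hornerD !hornerN. Qed.

Lemma taylor1_monoid : monoid_morphism taylor1.
Proof.
split; first by rewrite /taylor1 -polyC1 derivC !hornerC.
by move=> p q; rewrite /taylor1 derivM !hornerD !hornerM; congr (_, _) => /=; ring.
Qed.

HB.instance Definition _ :=
  GRing.isZmodMorphism.Build {poly R} dual taylor1 taylor1_zmod.
HB.instance Definition _ :=
  GRing.isMonoidMorphism.Build {poly R} dual taylor1 taylor1_monoid.
End DualNumbers.

(* The vector field is polynomial, so it commutes with ring morphisms. *)
Lemma Fsub_rmorph (S S' : comNzRingType) (f : {rmorphism S -> S'}) b b' z z' i :
  f b = b' -> (forall k, f (z k) = z' k) -> f (Fsub b z i) = Fsub b' z' i.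
Proof.
move=> fb fz; rewrite /Fsub; case: (val i) => [|[|[|[|[|n]]]]];
by rewrite !(rmorphD, rmorphM, rmorphN, rmorphB, rmorph1, rmorph_nat, fz, fb).
Qed.

Lemma partialF_dual (R : rcfType) (b : R) z i j :
  partialF b z i j = (Fsub ((b, 0) : dual R) (fun k => (z k, (k == j)%:R)) i).2.
Proof.
rewrite /partialF -[X in X = _]/(taylor1 _).2.
congr snd; apply: (@Fsub_rmorph _ _ (@taylor1 R)) => [|k]; first exact: taylor1C.
exact: taylor1_shift.
Qed.

Definition quadratic (R : comNzRingType) (a1 a0 : R) : {poly R} :=
  'X^2 + a1%:P * 'X + a0%:P.
Definition cubic (R : comNzRingType) (a2 a1 a0 : R) : {poly R} :=
  'X^3 + a2%:P * 'X^2 + a1%:P * 'X + a0%:P.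

Lemma quadratic_at0 (R : comNzRingType) (a1 a0 : R) : (quadratic a1 a0).[0] = a0.
Proof. by rewrite /quadratic !hornerE expr0n add0r. Qed.

Lemma cubic_at0 (R : comNzRingType) (a2 a1 a0 : R) : (cubic a2 a1 a0).[0] = a0.
Proof. by rewrite /cubic !hornerE !expr0n /= mulr0 !add0r. Qed.

(* Square matrices given by a table of entries indexed by natural numbers;
   this lets block decompositions be read off the table. *)
Definition natmx (T : Type) (n : nat) (f : nat -> nat -> T) : 'M[T]_n :=
  \matrix_(i, j) f i j.

Section NatMatrices.
Variable T : comNzRingType.
Implicit Types f g : nat -> nat -> T.

Lemma mul_natmx n f g :
  natmx n f *m natmx n g = natmx n (fun i j => \sum_(0 <= k < n) f i k * g k j).
Proof.
apply/matrixP => i j; rewrite !mxE big_mkord.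
by apply: eq_bigr => k _; rewrite !mxE.
Qed.

Lemma det_natmx_lblock n1 n2 f :
  (forall i j, (i < n1)%N -> (j < n2)%N -> f i (n1 + j)%N = 0) ->
  \det (natmx (n1 + n2) f) =
  \det (natmx n1 f) * \det (natmx n2 (fun i j => f (n1 + i)%N (n1 + j)%N)).
Proof.
move=> f_ur; rewrite -[natmx _ f]submxK.
have -> : ursubmx (natmx (n1 + n2) f) = 0 by apply/matrixP => i j; rewrite !mxE /= f_ur.
by rewrite det_lblock; congr (_ * _); congr (\det _); apply/matrixP => i j; rewrite !mxE.
Qed.

Lemma det_natmx_ublock n1 n2 f :
  (forall i j, (i < n2)%N -> (j < n1)%N -> f (n1 + i)%N j = 0) ->
  \det (natmx (n1 + n2) f) =
  \det (natmx n1 f) * \det (natmx n2 (fun i j => f (n1 + i)%N (n1 + j)%N)).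
Proof.
move=> f_dl; rewrite -[natmx _ f]submxK.
have -> : dlsubmx (natmx (n1 + n2) f) = 0 by apply/matrixP => i j; rewrite !mxE /= f_dl.
by rewrite det_ublock; congr (_ * _); congr (\det _); apply/matrixP => i j; rewrite !mxE.
Qed.

Lemma det_natmx_row0 n f : \det (natmx n.+1 f) =
  \sum_(0 <= j < n.+1)
    f 0%N j * ((-1) ^+ j * \det (natmx n (fun a c => f a.+1 (bump j c)))).
Proof.
rewrite (expand_det_row _ ord0) big_mkord; apply: eq_bigr => j _.
rewrite /cofactor mxE add0n; congr (_ * (_ * \det _)).
by apply/matrixP => a c; rewrite !mxE.
Qed.

Lemma char_poly_mx_natmx n f :
  char_poly_mx (natmx n f) = natmx n (fun i j => 'X *+ (i == j)%N - (f i j)%:P).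
Proof. by apply/matrixP => i j; rewrite !mxE. Qed.
End NatMatrices.

Section SmallCharPoly.
Variable T : comNzRingType.
Implicit Types f : nat -> nat -> T.

Definition trace2 f := f 0%N 0%N + f 1%N 1%N.
Definition det2 f := f 0%N 0%N * f 1%N 1%N - f 0%N 1%N * f 1%N 0%N.
Definition trace3 f := f 0%N 0%N + f 1%N 1%N + f 2%N 2%N.
Definition minors3 f :=
  (f 0%N 0%N * f 1%N 1%N - f 0%N 1%N * f 1%N 0%N)
  + (f 0%N 0%N * f 2%N 2%N - f 0%N 2%N * f 2%N 0%N)
  + (f 1%N 1%N * f 2%N 2%N - f 1%N 2%N * f 2%N 1%N).
Definition det3 f :=
  f 0%N 0%N * (f 1%N 1%N * f 2%N 2%N - f 1%N 2%N * f 2%N 1%N)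
  - f 0%N 1%N * (f 1%N 0%N * f 2%N 2%N - f 1%N 2%N * f 2%N 0%N)
  + f 0%N 2%N * (f 1%N 0%N * f 2%N 1%N - f 1%N 1%N * f 2%N 0%N).

Lemma char_poly_natmx2 f :
  char_poly (natmx 2 f) = quadratic (- trace2 f) (det2 f).
Proof.
rewrite /char_poly char_poly_mx_natmx.
do 2 rewrite !det_natmx_row0 !big_nat_recl // !big_geq //.
rewrite !det_mx00 /quadratic /trace2 /det2 /bump /=.
by rewrite !(polyCD, polyCN, polyCM, polyCB); ring.
Qed.

Lemma char_poly_natmx3 f :
  char_poly (natmx 3 f) = cubic (- trace3 f) (minors3 f) (- det3 f).
Proof.
rewrite /char_poly char_poly_mx_natmx.
do 3 rewrite !det_natmx_row0 !big_nat_recl // !big_geq //.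
rewrite !det_mx00 /cubic /trace3 /minors3 /det3 /bump /=.
by rewrite !(polyCD, polyCN, polyCM, polyCB); ring.
Qed.
End SmallCharPoly.

Lemma char_poly_similar (R : idomainType) n (A B Q : 'M[R]_n) :
  A *m Q = Q *m B -> \det Q != 0 -> char_poly A = char_poly B.
Proof.
move=> AQ_QB detQ; pose Qp := map_mx (@polyC R) Q.
have : char_poly_mx A *m Qp = Qp *m char_poly_mx B.
  by rewrite /char_poly_mx mulmxBl mulmxBr -!map_mxM AQ_QB -scalar_mxC.
move/(congr1 determinant); rewrite !det_mulmx /Qp det_map_mx [_ * char_poly B]mulrC.
by move/mulIf; apply; rewrite polyC_eq0.
Qed.

Section RouthHurwitz.
Variable R : rcfType.
Local Notation toC := (map_poly (real_complex R)).

Lemma map_real_complexX : toC 'X = 'X.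
Proof. exact: map_polyX. Qed.

Lemma root_quadratic_complex (a1 a0 u v : R) :
  root (toC (quadratic a1 a0)) (u +i* v)%C ->
  u ^+ 2 - v ^+ 2 + a1 * u + a0 = 0 /\ v * (2 * u + a1) = 0.
Proof.
rewrite /root /quadratic !(rmorphD, rmorphM, rmorphXn) /= map_real_complexX.
rewrite !map_polyC !hornerE => /eqP; rewrite expr2.
move=> /(congr1 (fun c => (complex.Re c, complex.Im c))) /= [hre him].
by split; [rewrite -hre | rewrite -him]; ring.
Qed.

Lemma root_cubic_complex (a2 a1 a0 u v : R) :
  root (toC (cubic a2 a1 a0)) (u +i* v)%C ->
  u ^+ 3 - 3 * u * v ^+ 2 + a2 * (u ^+ 2 - v ^+ 2) + a1 * u + a0 = 0 /\
  v * (3 * u ^+ 2 - v ^+ 2 + 2 * a2 * u + a1) = 0.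
Proof.
rewrite /root /cubic !(rmorphD, rmorphM, rmorphXn) /= map_real_complexX.
rewrite !map_polyC !hornerE => /eqP; rewrite !exprS expr0 mulr1.
move=> /(congr1 (fun c => (complex.Re c, complex.Im c))) /= [hre him].
by split; [rewrite -hre | rewrite -him]; ring.
Qed.

Lemma quadratic_Hurwitz (a1 a0 : R) (z : R[i]) :
  0 < a1 -> 0 < a0 -> root (toC (quadratic a1 a0)) z -> complex.Re z < 0.
Proof.
case: z => u v ha1 ha0 /root_quadratic_complex [hre him] /=.
rewrite ltNge; apply/negP => hu.
move/eqP: him; rewrite mulf_eq0 => /orP [/eqP v0 | /eqP hw]; last by lra.
by move: hre; rewrite v0; nra.
Qed.

(* Degree 3: a2, a1, a0 > 0 and a2 a1 > a0 force Re z < 0.  For a non-real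
   root, eliminating v^2 turns the real part of the equation into a sum of
   terms that are negative when u >= 0. *)
Lemma cubic_Hurwitz (a2 a1 a0 : R) (z : R[i]) :
  0 < a2 -> 0 < a1 -> 0 < a0 -> a0 < a2 * a1 ->
  root (toC (cubic a2 a1 a0)) z -> complex.Re z < 0.
Proof.
case: z => u v ha2 ha1 ha0 hH /root_cubic_complex [hre him] /=.
rewrite ltNge; apply/negP => hu.
move/eqP: him; rewrite mulf_eq0 => /orP [/eqP v0 | /eqP hw].
  by move: hre; rewrite v0; nra.
have hv2 : v ^+ 2 = 3 * u ^+ 2 + 2 * a2 * u + a1 by rewrite -[LHS]addr0 -hw; ring.
have : u ^+ 3 - 3 * u * v ^+ 2 + a2 * (u ^+ 2 - v ^+ 2) + a1 * u + a0 =
  - (8 * u ^+ 3 + 8 * a2 * u ^+ 2 + 2 * (a2 ^+ 2 + a1) * u) - (a2 * a1 - a0).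
  by rewrite hv2; ring.
by rewrite hre; nra.
Qed.

Lemma ceval_complex (p : {poly R}) (z : R * R) :
  ((ceval p z).1 +i* (ceval p z).2)%C = (toC p).[(z.1 +i* z.2)%C].
Proof.
rewrite map_polyE horner_Poly /ceval.
elim: (polyseq p) => //= c s <-.
by apply/eqP; rewrite eq_complex /=; apply/andP; split; apply/eqP; ring.
Qed.

Lemma ceigenvalueP (n : nat) (A : 'M[R]_n) (lam : R * R) :
  ceigenvalue A lam <-> root (toC (char_poly A)) (lam.1 +i* lam.2)%C.
Proof.
rewrite /ceigenvalue /root -ceval_complex.
by case: (ceval _ _) => a c; split => [[-> ->] // | /eqP [-> ->]].
Qed.
End RouthHurwitz.

Section SymmetricEquilibrium.
Variables (R : rcfType) (b x3 x y3 y : R).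

Definition jac_entry (i j : nat) : R :=
  match i, j with
  | 0, 0 => 1 - 3 * b + 2 * x3 * y3 - 2 * x3 - 2 * x * y - y3
  | 0, 1 | 0, 2 => - x3 * y
  | 0, 3 => x3 * x3 - x3
  | 0, 4 | 0, 5 => - x3 * x
  | 1, 0 | 2, 0 => b + x * y3 - x
  | 1, 1 | 2, 2 => - 2 * b + x3 * y3 - x3 - 3 * x * y + y
  | 1, 2 | 2, 1 => - x * y
  | 1, 3 | 2, 3 => x3 * x
  | 1, 4 | 2, 5 => - x * x
  | 1, 5 | 2, 4 => - x * x + x
  | 3, 0 => y3 * y3 - y3
  | 3, 1 | 3, 2 => - y3 * y
  | 3, 3 => 1 - 3 * b + 2 * x3 * y3 - x3 - 2 * x * y - 2 * y3
  | 3, 4 | 3, 5 => - x * y3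
  | 4, 0 | 5, 0 => y3 * y
  | 4, 1 | 5, 2 => - y * y
  | 4, 2 | 5, 1 => - y * y + y
  | 4, 3 | 5, 3 => b + x3 * y - y
  | 4, 4 | 5, 5 => - 2 * b + x3 * y3 - 3 * x * y + x - y3
  | 4, 5 | 5, 4 => - x * y
  | _, _ => 0
  end.

(* Columns: e_x3, (x3,0,0,y3,0,0), e_x2 + e_x1, e_y2 + e_y1, e_x2 - e_x1 and
   e_y2 - e_y1. *)
Definition basis_entry (i j : nat) : R :=
  match i, j with
  | 0, 0 | 1, 2 | 1, 4 | 2, 2 | 4, 3 | 4, 5 | 5, 3 => 1
  | 2, 4 | 5, 5 => - 1
  | 0, 1 => x3
  | 3, 1 => y3
  | _, _ => 0
  end.

Let p := 1 - b - y3 - y.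
Let q := 1 - b - x3 - x.

(* The Jacobian in the new basis: the first row is zero, and the entries in
   rows 1-3, columns 4-5 vanish. *)
Definition reduced_entry (i j : nat) : R :=
  match i, j with
  | 1, 0 => y3 - 1
  | 1, 1 => 2 * x3 * y3 - x3 - y3
  | 1, 2 => - 2 * y
  | 1, 3 => - 2 * x
  | 2, 0 => b + x * y3 - x
  | 2, 1 => b * x3 + 2 * x3 * x * y3 - x3 * x
  | 2, 2 => b - 2 * x * y + y3 + y - 1
  | 2, 3 => - 2 * x * x + x
  | 3, 0 => y3 * y
  | 3, 1 => b * y3 + 2 * x3 * y3 * y - y3 * y
  | 3, 2 => - 2 * y * y + y
  | 3, 3 => b + x3 - 2 * x * y + x - 1
  | 4, 4 => - p
  | 4, 5 => - x
  | 5, 4 => - y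
  | 5, 5 => - q
  | _, _ => 0
  end.

(* The diagonal blocks acting on symmetric and antisymmetric perturbations. *)
Definition sym_block (i j : nat) : R := reduced_entry i.+1 j.+1.
Definition anti_block (i j : nat) : R := reduced_entry (4 + i) (4 + j).

Lemma jacobian_symPoint :
  jacobianF b (symPoint x3 x y3 y) = natmx 6 jac_entry.
Proof.
apply/matrixP => i j; rewrite !mxE partialF_dual /Fsub /symPoint /=.
have inordE (m : nat) : (m < 6)%N -> (inord m == j) = (m == val j).
  by move=> hm; rewrite -val_eqE /= inordK.
rewrite !inordK // !inordE // {inordE}.
case: i => [[|[|[|[|[|[|i]]]]]] Hi] //; case: j => [[|[|[|[|[|[|j]]]]]] Hj] //=.
all: ring.
Qed.

Lemma jacobian_conj :
  x3 + y3 - x3 * y3 + 2 * x * y = 1 - 3 * b ->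
  natmx 6 jac_entry *m natmx 6 basis_entry =
  natmx 6 basis_entry *m natmx 6 reduced_entry.
Proof.
move=> hw; have hx3y3 : x3 * y3 = x3 + y3 + 2 * x * y - 1 + 3 * b by lra.
rewrite !mul_natmx; apply/matrixP => i j; rewrite !mxE.
case: i => [[|[|[|[|[|[|i]]]]]] Hi] //; case: j => [[|[|[|[|[|[|j]]]]]] Hj] //.
all: rewrite !big_nat_recl // big_geq //= /p /q.
all: ring: hx3y3.
Qed.

Lemma det_basis : \det (natmx 6 basis_entry) = - (4 * y3).
Proof.
rewrite (@det_natmx_ublock _ 1 5); last by move=> [|[|[|[|[|i]]]]] [|j].
rewrite det_mx11 mxE /=.
do 5 rewrite !det_natmx_row0 !big_nat_recl // !big_geq // /bump /= ?(mul0r, add0r, addr0).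
by rewrite det_mx00; ring.
Qed.

Lemma char_poly_reduced : char_poly (natmx 6 reduced_entry) =
  'X * char_poly (natmx 3 sym_block) * char_poly (natmx 2 anti_block).
Proof.
rewrite /char_poly char_poly_mx_natmx (@det_natmx_lblock _ 1 5); last first.
  by move=> [|i] // [|[|[|[|[|j]]]]] // _ _; rewrite subr0.
rewrite det_mx11 mxE /= mulr1n subr0 -[RHS]mulrA; congr (_ * _).
rewrite -[natmx 5%N _]/(natmx (3 + 2)%N _) (@det_natmx_lblock _ 3 2); last first.
  by move=> [|[|[|i]]] // [|[|j]] // _ _; rewrite subr0.
rewrite !char_poly_mx_natmx; congr (\det _ * \det _).
all: by apply/matrixP => i j; rewrite !mxE.
Qed.

Lemma char_poly_jacobian :
  0 < y3 -> x3 + y3 - x3 * y3 + 2 * x * y = 1 - 3 * b ->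
  char_poly (jacobianF b (symPoint x3 x y3 y)) =
  'X * cubic (- trace3 sym_block) (minors3 sym_block) (- det3 sym_block)
     * quadratic (- trace2 anti_block) (det2 anti_block).
Proof.
move=> hy3 hw; rewrite jacobian_symPoint (char_poly_similar (jacobian_conj hw)).
  by rewrite char_poly_reduced char_poly_natmx3 char_poly_natmx2.
by rewrite det_basis oppr_eq0 mulf_neq0 ?pnatr_eq0 ?gt_eqF.
Qed.
End SymmetricEquilibrium.

Lemma onCurveC_equations (R : rcfType) (b x3 x y3 y : R) :
  0 < x3 -> onCurveC b x3 x y3 y ->
  [/\ x3 + y3 - x3 * y3 + 2 * x * y = 1 - 3 * b,
      x * (1 - b - y3 - y) = b * x3 & y * (1 - b - x3 - x) = b * y3].
Proof.
move=> hx3 hC; have := hC (inord 0); have := hC (inord 1); have := hC (inord 4).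
rewrite /Fsub /symPoint /= !inordK // => F4 F1 /eqP.
rewrite mulf_eq0 (gt_eqF hx3) /= subr_eq0 => /eqP F0.
have hw : x3 + y3 - x3 * y3 + 2 * x * y = 1 - 3 * b by lra.
have hx3y3 : x3 * y3 = x3 + y3 + 2 * x * y - 1 + 3 * b by lra.
by split => //; rewrite -[RHS]subr0; [rewrite -F1 | rewrite -F4]; ring: hx3y3.
Qed.

Ltac positivity := first
  [ assumption | exact: ltr01 | by rewrite ltr0n
  | apply: addr_gt0; positivity | apply: mulr_gt0; positivity ].

Section CoefficientSigns.
Variables (R : rcfType) (b x3 x y3 y : R).
Hypotheses (hb : 0 < b) (hx3 : 0 < x3) (hx : 0 < x) (hy3 : 0 < y3) (hy : 0 < y).
Let p := 1 - b - y3 - y.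
Let q := 1 - b - x3 - x.
Let u := 1 - x3.
Let v := 1 - y3.
Hypotheses (hw : x3 + y3 - x3 * y3 + 2 * x * y = 1 - 3 * b)
  (hxp : x * p = b * x3) (hyq : y * q = b * y3).

Lemma curve_pq : p * q = x * y + b + b * b.
Proof.
apply/eqP; rewrite -subr_eq0; apply/eqP.
transitivity (- (x3 + y3 - x3 * y3 + 2 * x * y - (1 - 3 * b))
              - (x * p - b * x3) - (y * q - b * y3)); first by rewrite /p /q; ring.
by rewrite hw hxp hyq !subrr oppr0 !addr0.
Qed.

Lemma p_gt0 : 0 < p.
Proof. by rewrite -(pmulr_rgt0 _ hx) hxp mulr_gt0. Qed.

Lemma q_gt0 : 0 < q.
Proof. by rewrite -(pmulr_rgt0 _ hy) hyq mulr_gt0. Qed.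

Lemma u_gt0 : 0 < u.
Proof.
have -> : u = q + b + x by rewrite /u /q; ring.
by have hq := q_gt0; positivity.
Qed.

Lemma v_gt0 : 0 < v.
Proof.
have -> : v = p + b + y by rewrite /v /p; ring.
by have hp := p_gt0; positivity.
Qed.

Lemma positive_modulo_curve (A S c1 c2 c3 : R) :
  A = S + c1 * (p * q - (x * y + b + b * b)) + c2 * (x * p - b * x3)
        + c3 * (y * q - b * y3) ->
  0 < S -> 0 < A.
Proof. by rewrite curve_pq hxp hyq !subrr !mulr0 !addr0 => ->. Qed.

Let k3 := sym_block b x3 x y3 y.
Let k2 := anti_block b x3 x y3 y.

Local Ltac curve_positivity :=
  have hp := p_gt0; have hq := q_gt0; have hu := u_gt0; have hv := v_gt0;
  positivity.

Lemma sym_trace_neg : 0 < - trace3 k3.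
Proof.
apply: (@positive_modulo_curve _ (4 * x * y + x3 * v + y3 * u + p + q) 0 0 0).
  by rewrite /k3 /trace3 /sym_block /reduced_entry /p /q /u /v /=; ring.
by curve_positivity.
Qed.

Lemma sym_minors_pos : 0 < minors3 k3.
Proof.
apply: (@positive_modulo_curve _
  (b * b + 4 * b * x * y3 + 4 * b * y * x3 + b + 2 * x * x * y + 2 * x * y * y
   + 2 * x * y * x3 + 2 * x * y * y3 + x3 * p * v + x3 * q * v + y3 * p * u
   + y3 * q * u)
  1 (2 * y) (2 * x)).
  by rewrite /k3 /minors3 /sym_block /reduced_entry /p /q /u /v /=; ring.
by curve_positivity.
Qed.

Lemma sym_det_neg : 0 < - det3 k3.
Proof.
apply: (@positive_modulo_curve _
  (2 * b * b * x3 * y3 + b * b * x3 + b * b * y3 + 2 * b * x * y * x3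
   + 2 * b * x * y * y3 + 2 * b * x * y3 * y3 + 2 * b * y * x3 * x3
   + b * x3 * v + b * y3 * u + 2 * x * x * y * y3 + 2 * x * y * y * x3)
  (- 2 * x3 * y3 + x3 + y3) (2 * b * y3 + 2 * y * x3) (2 * b * x3 + 2 * x * y3)).
  by rewrite /k3 /det3 /sym_block /reduced_entry /p /q /u /v /=; ring.
by curve_positivity.
Qed.

Lemma sym_hurwitz : - det3 k3 < - trace3 k3 * minors3 k3.
Proof.
rewrite -subr_gt0; apply: (@positive_modulo_curve _
  (4 * b * b * x * y + 2 * b * b * x3 + 2 * b * b * y3 + b * b * p + b * b * q
   + 16 * b * x * x * y * y3 + 2 * b * x * x * y3 + 16 * b * x * y * y * x3
   + 4 * b * x * y * x3 * y3 + 4 * b * x * y + 2 * b * x * x3 * y3 * y3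
   + 10 * b * x * x3 * y3 * v + 8 * b * x * y3 * y3 * u + 4 * b * x * y3 * q
   + 2 * b * y * y * x3 + 2 * b * y * x3 * x3 * y3 + 8 * b * y * x3 * x3 * v
   + 10 * b * y * x3 * y3 * u + 4 * b * y * x3 * p + 2 * b * x3 * v
   + 2 * b * y3 * u + b * p + b * q + 8 * x * x * x * y * y
   + 8 * x * x * y * y * y + 8 * x * x * y * y * x3 + 8 * x * x * y * y * y3
   + 2 * x * x * y * x3 * v + 2 * x * y * y * y3 * u + 2 * x * y * x3 * x3 * v
   + 2 * x * y * x3 * y3 * p + 2 * x * y * x3 * y3 * q + 2 * x * y * x3 * v
   + 2 * x * y * y3 * y3 * u + 2 * x * y * y3 * u + x3 * x3 * p * v * v
   + x3 * x3 * q * v * v + 2 * x3 * y3 * p * u * v + 2 * x3 * y3 * q * u * v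
   + x3 * p * p * v + x3 * q * q * v + y3 * y3 * p * u * u
   + y3 * y3 * q * u * u + y3 * p * p * u + y3 * q * q * u)
  (4 * x * y - 4 * x3 * y3 + 2 * x3 + 2 * y3 + p + q)
  (4 * b * y3 + 8 * x * y * y + 2 * x * y + 2 * y * y - 12 * y * x3 * y3
   + 6 * y * x3 + 8 * y * y3 + 2 * y * p)
  (8 * x * x * y + 2 * x * x + 2 * x * y - 12 * x * x3 * y3 + 8 * x * x3
   + 6 * x * y3 + 4 * x * p + 2 * x * q)).
  by rewrite /k3 /trace3 /minors3 /det3 /sym_block /reduced_entry /p /q /u /v /=; ring.
by curve_positivity.
Qed.

Lemma anti_trace_neg : 0 < - trace2 k2.
Proof.
apply: (@positive_modulo_curve _ (p + q) 0 0 0).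
  by rewrite /k2 /trace2 /anti_block /reduced_entry /p /q /=; ring.
by curve_positivity.
Qed.

Lemma anti_det_pos : 0 < det2 k2.
Proof.
apply: (@positive_modulo_curve _ (b + b * b) 1 0 0).
  by rewrite /k2 /det2 /anti_block /reduced_entry /p /q /=; ring.
by curve_positivity.
Qed.

Local Notation toC := (map_poly (real_complex R)).

Lemma sym_block_stable (z : R[i]) :
  root (toC (cubic (- trace3 k3) (minors3 k3) (- det3 k3))) z -> complex.Re z < 0.
Proof.
apply: cubic_Hurwitz.
- exact: sym_trace_neg.
- exact: sym_minors_pos.
- exact: sym_det_neg.
- exact: sym_hurwitz.
Qed.

Lemma anti_block_stable (z : R[i]) :
  root (toC (quadratic (- trace2 k2) (det2 k2))) z -> complex.Re z < 0.
Proof. by apply: quadratic_Hurwitz; [exact: anti_trace_neg | exact: anti_det_pos]. Qed.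
End CoefficientSigns.

Theorem mainTheorem6 (R : rcfType) (b x3 x y3 y : R) :
  0 < b -> b <= 100%:R^-1 ->
  0 < x3 -> 0 < y3 -> 0 < x -> 0 < y ->
  onCurveC b x3 x y3 y ->
  let J := jacobianF b (symPoint x3 x y3 y) in
  (* 0 is an eigenvalue of J, of algebraic multiplicity exactly one *)
  mup 0 (char_poly J) = 1%N /\
  (* the other five eigenvalues (with multiplicity) have negative real part *)
  (forall lam : R * R, ceigenvalue J lam -> lam <> (0, 0) -> lam.1 < 0).
Proof.
move=> hb _ hx3 hy3 hx hy hC J.
have [hw hxp hyq] := onCurveC_equations hx3 hC.
have charJ := char_poly_jacobian hy3 hw.
split.
  rewrite /J charJ mupMl; last first.
    by rewrite /root quadratic_at0 gt_eqF // (anti_det_pos hb hx3 hx hy3 hy hw hxp hyq).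
  rewrite mupMl; last first.
    by rewrite /root cubic_at0 gt_eqF // (sym_det_neg hb hx3 hx hy3 hy hw hxp hyq).
  by rewrite -[X in mup _ X]expr1 -[X in mup _ (X ^+ 1)]subr0 mup_XsubCX eqxx.
move=> [u v] /ceigenvalueP; rewrite /J charJ !rmorphM !rootM /=.
move=> /orP [/orP [] | ] hroot lam_neq0.
- by move: hroot; rewrite map_real_complexX rootX => /eqP [u0 v0]; case: lam_neq0; rewrite u0 v0.
- exact: (sym_block_stable hb hx3 hx hy3 hy hw hxp hyq hroot).
- exact: (anti_block_stable hb hx3 hx hy3 hy hw hxp hyq hroot).
Qed.
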